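(* For every instance, $$\mathrm{opt}_M\text{-}\mathrm{SUM}\le \mathrm{opt}_D\text{-}\mathrm{EMP}\qquad\text{and}\qquad \mathrm{opt}_M\text{-}\mathrm{MAX}\le\mathrm{opt}_D\text{-}\mathrm{WMP}.$$
   Context: An instance consists of a finite set $E$ of elements with nonnegative weights $(p_e)$ (normalized $\sum_ep_e=1$ for SUM objectives, $\max_ep_e=1$ for MAX objectives) and $m$ tests, test $i$ being a subset $s_i\subseteq E$. A deterministic schedule is a fixed infinite test sequence $\sigma_1,\sigma_2,\dots$; a memoryless schedule draws each $\sigma_t$ i.i.d. from a distribution $q$ on tests. Detection time $T(e,t)=\mathbb{E}[1+\min\{h\ge0:e\in s_{\sigma_{t+h}}\}]$, $M_t[e]=\sup_tT(e,t)$, $E_t[e]=\lim_H\frac1H\sum_{t\le H}T(e,t)$; valid schedules have $M_t[e]<\infty$ and $E_t[e]$ existing for all $e$, and convergent test frequencies $\lim_H\frac1H\sum_{t\le H}\Pr[\sigma_t=i]$. $\mathrm{EMP}=\sum_ep_eM_t[e]$, $\mathrm{WMP}=\sup_{e,t}p_eT(e,t)$. $\mathrm{opt}_D\text{-}X$ is the infimum of $X$ over valid deterministic schedules; $\mathrm{opt}_M\text{-}\mathrm{SUM}=\inf_q\sum_ep_e/Q_e$ and $\mathrm{opt}_M\text{-}\mathrm{MAX}=\inf_q\max_ep_e/Q_e$ over distributions $q$ on tests, where $Q_e=\sum_{i:e\in s_i}q_i$ (these are the optimal values of the SUM and MAX objectives over memoryless schedules). *)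

From HB Require Import structures.
From mathcomp Require Import all_boot all_order all_algebra.
From mathcomp Require Import all_classical all_reals all_analysis.
Set Implicit Arguments. Unset Strict Implicit. Unset Printing Implicit Defensive.
Import Order.TTheory GRing.Theory Num.Theory.
Import numFieldNormedType.Exports.
Local Open Scope classical_set_scope.
Local Open Scope ring_scope.

Section Testing.
Variables (R : realType) (E : finType) (m : nat) (s : 'I_m -> {set E}).

(* A deterministic schedule: sigma t is the test performed at time t
   (times are indexed from 0 instead of 1). *)
Definition det_schedule := nat -> 'I_m.

Definition detT (sigma : det_schedule) (e : E) (t : nat) : \bar R :=
  ereal_inf [set ((h.+1)%:R : R)%:E | h in [set h : nat | e \in s (sigma (t + h))]].

Definition detM (sigma : det_schedule) (e : E) : \bar R :=
  ereal_sup (range (detT sigma e)).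

(* Cesaro averages (1/H) sum_{t <= H} T(e,t), with H+1 time steps 0..H. *)
Definition cesaroT (sigma : det_schedule) (e : E) (H : nat) : R :=
  (H.+1%:R)^-1 * \sum_(t < H.+1) fine (detT sigma e t).

Definition freq (sigma : det_schedule) (i : 'I_m) (H : nat) : R :=
  (H.+1%:R)^-1 * \sum_(t < H.+1) (if sigma t == i then 1 else 0).

Definition valid_det (sigma : det_schedule) : Prop :=
  [/\ forall e, detM sigma e < +oo,
      forall e, cvgn (cesaroT sigma e)
    & forall i, cvgn (freq sigma i)]%E.

Definition EMP (p : E -> R) (sigma : det_schedule) : \bar R :=
  (\sum_(e : E) (p e)%:E * detM sigma e)%E.

Definition WMP (p : E -> R) (sigma : det_schedule) : \bar R :=
  ereal_sup [set x | exists e t, x = ((p e)%:E * detT sigma e t)%E].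

Definition optD_EMP (p : E -> R) : \bar R := ereal_inf [set EMP p sigma | sigma in valid_det].
Definition optD_WMP (p : E -> R) : \bar R := ereal_inf [set WMP p sigma | sigma in valid_det].

Definition test_distr : set ('I_m -> R) :=
  [set q | (forall i, 0 <= q i) /\ \sum_(i < m) q i = 1].

Definition Qe (q : 'I_m -> R) (e : E) : R := \sum_(i < m | e \in s i) q i.

(* p_e / Q_e, as the (extended-real) memoryless objective term; Q_e = 0
   means e is never detected, the term is then +oo. *)
Definition ratio (pe Qv : R) : \bar R := if Qv == 0 then +oo%E else (pe / Qv)%:E.

Definition optM_SUM (p : E -> R) : \bar R :=
  ereal_inf [set (\sum_(e : E) ratio (p e) (Qe q e))%E | q in test_distr].

Definition optM_MAX (p : E -> R) : \bar R :=
  ereal_inf [set (\big[Order.max/-oo]_(e : E) ratio (p e) (Qe q e))%E | q in test_distr].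

End Testing.

From Pilot Require Import Defs.
From HB Require Import structures.
From mathcomp Require Import all_boot all_order all_algebra.
From mathcomp Require Import all_classical all_reals all_analysis.
From mathcomp Require Import zify.
Import Order.TTheory GRing.Theory Num.Theory.
Import numFieldNormedType.Exports.

Set Implicit Arguments.
Unset Strict Implicit.

(* If a deterministic schedule has finite worst detection time for e, then,
   the detection times being integers, some T(e,t0) = N attains M_t[e], and
   every window of N consecutive steps contains a test covering e.  Hence the
   covering tests have long-run frequency Q_e >= 1/N, i.e. p_e/Q_e <= p_e N,
   where q is the vector of limiting test frequencies of the schedule (a
   distribution on tests, so a memoryless candidate).  Summing over e with
   N <= M_t[e] gives opt_M-SUM <= EMP; taking the maximum, N = T(e,t0) gives
   opt_M-MAX <= WMP. *)

Lemma sum_window_ge1 (b : nat -> bool) (a N h : nat) :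
  h < N -> b (a + h) -> 1 <= \sum_(a <= t < a + N) b t.
Proof.
move=> hN bh.
rewrite (big_cat_nat _ (n := a + h)) ?leq_addr ?leq_add2l ?(ltnW hN) //=.
rewrite [X in _ + X]big_ltn ?ltn_add2l //= bh.
lia.
Qed.

Lemma sum_prefix_mono (b : nat -> bool) (n n' : nat) :
  n <= n' -> \sum_(0 <= t < n) b t <= \sum_(0 <= t < n') b t.
Proof. by move=> le; rewrite [X in _ <= X](big_cat_nat _ (n := n)) //= leq_addr. Qed.

Section WindowedHits.
Variables (b : nat -> bool) (N : nat).
Hypothesis hit_in_window : forall t, exists2 h, h < N & b (t + h).

Lemma sum_blocks_ge (k : nat) : k <= \sum_(0 <= t < k * N) b t.
Proof.
elim: k => [|k IH] //.
rewrite mulSnr (big_cat_nat _ (n := k * N)) ?leq_addr //=.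
have [h hN bh] := hit_in_window (k * N).
have := sum_window_ge1 hN bh.
lia.
Qed.

Lemma sum_prefix_ge (n : nat) : n %/ N <= \sum_(0 <= t < n) b t.
Proof. exact: leq_trans (sum_blocks_ge _) (sum_prefix_mono _ (leq_divM n N)). Qed.

Local Open Scope ring_scope.

(* The extra [1/(H+1)] absorbs the rounding of [(H+1) %/ N]. *)
Lemma hit_frequency_ge (R : realType) (H : nat) : (0 < N)%N ->
  (N%:R : R)^-1 <=
    (H.+1%:R)^-1 * (\sum_(0 <= t < H.+1) b t)%N%:R + (H.+1%:R)^-1.
Proof.
move=> N_gt0; set c := (\sum_(0 <= t < H.+1) b t)%N.
have H_lt : (H.+1 < c.+1 * N)%N.
  apply: leq_trans (ltn_ceil H.+1 N_gt0) _.
  by rewrite leq_mul2r ltnS sum_prefix_ge orbT.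
rewrite [_^-1 * _]mulrC -[X in _ + X]mul1r -mulrDl.
rewrite ler_pdivlMr ?ltr0n // mulrC ler_pdivrMr ?ltr0n //.
by rewrite natr1 -natrM ler_nat ltnW.
Qed.

End WindowedHits.

Local Open Scope classical_set_scope.
Local Open Scope ring_scope.

Section Schedule.
Variables (R : realType) (E : finType) (m : nat) (s : 'I_m -> {set E}).
Variable sigma : det_schedule m.

Let T := detT R s sigma.
Let M := Defs.detM R s sigma.

Lemma detT_ge1 e t : (1%:E <= T e t)%E.
Proof. by apply: le_ereal_inf_tmp => _ [h _ <-]; rewrite lee_fin ler1n. Qed.

Lemma detT_le_detM e t : (T e t <= M e)%E.
Proof. by apply: ereal_sup_ubound; exists t. Qed.

Lemma detT_fin_hit e t : (T e t < +oo)%E ->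
  exists h, e \in s (sigma (t + h)%N) /\ T e t = (h.+1%:R)%:E.
Proof.
move=> fin.
have ex : exists h, e \in s (sigma (t + h)%N).
  apply: contrapT => nex; move: fin; rewrite /T /detT.
  suff -> : [set h : nat | e \in s (sigma (t + h)%N)] = set0.
    by rewrite image_set0 ereal_inf0.
  by apply/seteqP; split => // h hh; apply: nex; exists h.
case: (ex_minnP ex) => h0 eh0 min_h0; exists h0; split => //.
apply/eqP; rewrite eq_le; apply/andP; split.
  by apply: ereal_inf_lbound; exists h0.
by apply: le_ereal_inf_tmp => _ [h eh <-]; rewrite lee_fin ler_nat ltnS min_h0.
Qed.

(* [T e t0 > M e - 1] and all values of [T e] are integers, so [T e t0] is
   the largest of them. *)
Lemma detM_fin_window e : (M e < +oo)%E ->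
  exists N : nat, [/\ (0 < N)%N, exists t0, T e t0 = (N%:R)%:E,
    (N%:R%:E <= M e)%E &
    forall t, exists2 h, (h < N)%N & e \in s (sigma (t + h)%N)].
Proof.
move=> M_fin.
have T_fin t : (T e t < +oo)%E := le_lt_trans (detT_le_detM e t) M_fin.
have M_num : M e \is a fin_num.
  by rewrite ge0_fin_numE // (le_trans _ (detT_le_detM e 0)) // (le_trans _ (detT_ge1 e 0)).

have : ((fine (M e) - 1)%:E < ereal_sup (range (T e)))%E.
  by rewrite -/(M e) -[X in (_ < X)%E](fineK M_num) lte_fin ltrBlDr ltrDl.
case/ereal_sup_gt => _ [t0 _ <-] T_t0_gt.
have [h0 [_ T_t0]] := detT_fin_hit (T_fin t0).
exists h0.+1; split => //; first by exists t0.
  by rewrite -T_t0 detT_le_detM.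
move=> t; have [h [eh T_t]] := detT_fin_hit (T_fin t).
exists h => //.
have := detT_le_detM e t; rewrite T_t -(fineK M_num) lee_fin => T_t_le.
move: T_t0_gt; rewrite T_t0 lte_fin ltrBlDr => T_t0_gt.
have : (h.+1%:R : R) < h0.+1%:R + 1 := le_lt_trans T_t_le T_t0_gt.
by rewrite natr1 ltr_nat ltnS.
Qed.

Lemma freq_ge0 i H : 0 <= freq R sigma i H.
Proof. by rewrite mulr_ge0 ?invr_ge0 // sumr_ge0 // => t _; case: ifP. Qed.

Lemma sum_freq H : \sum_(i < m) freq R sigma i H = 1.
Proof.
rewrite /freq -mulr_sumr exchange_big /= (eq_bigr (fun _ => 1)) => [|t _].
  by rewrite sumr_const card_ord mulVr // unitfE pnatr_eq0.
by rewrite (bigD1 (sigma t)) //= eqxx big1 ?addr0 // => i; rewrite eq_sym => /negbTE ->.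
Qed.

Lemma sum_freq_covering e H :
  \sum_(i < m | e \in s i) freq R sigma i H =
  (H.+1%:R)^-1 * (\sum_(0 <= t < H.+1) (e \in s (sigma t)))%N%:R.
Proof.
rewrite /freq -mulr_sumr exchange_big /= natr_sum big_mkord; congr (_ * _).
apply: eq_bigr => t _; case: (boolP (e \in s (sigma t))) => et.
  rewrite (bigD1 (sigma t)) //= eqxx big1 ?addr0 // => i /andP[_ /negbTE].
  by rewrite eq_sym => ->.
by rewrite big1 // => i ei; case: eqP => // ti; rewrite ti ei in et.
Qed.

Hypothesis freq_cvg : forall i, cvgn (freq R sigma i).

Definition limit_freq i := limn (freq R sigma i).

Lemma cvg_sum_freq (P : pred 'I_m) :
  (fun H => \sum_(i < m | P i) freq R sigma i H) @ \oo -->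
  \sum_(i < m | P i) limit_freq i.
Proof.
exact: (@cvg_big R 'I_m +%R 0 P add_continuous nat \oo (index_enum _)
  (fun i H => freq R sigma i H) limit_freq _ (fun i _ => @freq_cvg i)).
Qed.

Lemma limit_freq_distr : test_distr limit_freq.
Proof.
split=> [i|].
  by apply: limr_ge; [exact: freq_cvg | apply: nearW => H; exact: freq_ge0].
have := @cvg_sum_freq predT; under eq_cvg do rewrite sum_freq.
by move/(cvg_lim (@Rhausdorff R)); rewrite lim_cst.
Qed.

Lemma Qe_limit_freq_ge e N : (0 < N)%N ->
  (forall t, exists2 h, (h < N)%N & e \in s (sigma (t + h)%N)) ->
  (N%:R)^-1 <= Qe s limit_freq e.
Proof.
move=> N_gt0 hit.
have Q_cvg : (fun H => \sum_(i < m | e \in s i) freq R sigma i H + harmonic H)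
    @ \oo --> Qe s limit_freq e + 0.
  exact: cvgD (@cvg_sum_freq _) cvg_harmonic.
rewrite -[Qe _ _ _]addr0 -(cvg_lim (@Rhausdorff R) Q_cvg).
apply: limr_ge; first by apply/cvg_ex; exists (Qe s limit_freq e + 0).
apply: nearW => H; rewrite sum_freq_covering.
exact: (hit_frequency_ge (b := fun t => e \in s (sigma t))).
Qed.

End Schedule.

Lemma ratio_le_mul (R : realType) (pe Q : R) (N : nat) :
  0 <= pe -> (0 < N)%N -> N%:R^-1 <= Q -> (Defs.ratio pe Q <= pe%:E * N%:R%:E)%E.
Proof.
move=> pe_ge0 N_gt0 Q_ge.
have Q_gt0 : 0 < Q by apply: lt_le_trans Q_ge; rewrite invr_gt0 ltr0n.
rewrite /Defs.ratio gt_eqF // -EFinM lee_fin ler_wpM2l //.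
by rewrite -[N%:R]invrK lef_pV2 // posrE ?invr_gt0 ltr0n.
Qed.

Theorem lemma8 (R : realType) (E : finType) (m : nat) (s : 'I_m -> {set E})
    (p : E -> R) (p_ge0 : forall e, 0 <= p e) :
  (\sum_(e : E) p e = 1 -> (optM_SUM s p <= optD_EMP s p)%E) /\
  (\big[Num.max/0]_(e : E) p e = 1 -> (optM_MAX s p <= optD_WMP s p)%E).
Proof.
have ratio_le sigma : valid_det R s sigma -> forall e, exists N : nat,
    [/\ (Defs.ratio (p e) (Qe s (limit_freq R sigma) e) <= (p e)%:E * N%:R%:E)%E,
      exists t0, detT R s sigma e t0 = N%:R%:E & (N%:R%:E <= Defs.detM R s sigma e)%E].
  move=> [M_fin _ freq_cvg] e.
  have [N [N_gt0 T_t0 N_le hit]] := detM_fin_window (M_fin e).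
  exists N; split=> //.
  exact/ratio_le_mul/(Qe_limit_freq_ge freq_cvg N_gt0 hit).
have limit_freq_mem sigma : valid_det R s sigma -> test_distr (limit_freq R sigma).
  by case=> _ _; exact: limit_freq_distr.
split=> _; apply: le_ereal_inf_tmp => _ [sigma valid <-].
  apply: le_trans (ereal_inf_lbound _) _; first by exists (limit_freq R sigma);
    [exact: limit_freq_mem|].
  apply: lee_sum => e _; have [N [le_N _ N_le]] := ratio_le sigma valid e.
  by apply: le_trans le_N _; apply: lee_wpmul2l; rewrite ?lee_fin.
apply: le_trans (ereal_inf_lbound _) _; first by exists (limit_freq R sigma);
  [exact: limit_freq_mem|].
apply: bigmax_le => [|e _]; first exact: leNye.
have [N [le_N [t0 T_t0] _]] := ratio_le sigma valid e.
by apply: le_trans le_N _; rewrite -T_t0; apply: ereal_sup_ubound; exists e, t0.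
Qed.
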